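(* In the Setting below, let $I$ be an $\mathfrak n$-primary ideal of $S$. Then $$g(I)+1\le \ell_S(S/I)+2\delta.$$
   Context: Setting: $(S,\mathfrak n)$ is a one-dimensional Noetherian local domain, not regular, with infinite residue field $k$ and quotient field $K$; its integral closure $\overline S$ in $K$ is a DVR and a finite $S$-module, with uniformizer $t$, and $S/\mathfrak n\to\overline S/t\overline S$ is an isomorphism. $\mathrm{Val}$ is the valuation of $\overline S$ on $K$ with $\mathrm{Val}(t)=1$. $\delta=\ell_S(\overline S/S)$. $g(I)=\max\{\mathrm{Val}(a)\mid a\in K\setminus I,\ a\neq0\}$. *)

From mathcomp Require Import all_boot all_order all_algebra.
Set Implicit Arguments. Unset Strict Implicit. Unset Printing Implicit Defensive.
Import Order.TTheory GRing.Theory Num.Theory.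
Local Open Scope ring_scope.

Definition subset (K : Type) (A B : K -> Prop) := forall x, A x -> B x.
Definition strict_subset (K : Type) (A B : K -> Prop) :=
  subset A B /\ exists x, B x /\ ~ A x.

Definition subring (K : fieldType) (S : K -> Prop) :=
  S 1 /\ (forall x y, S x -> S y -> S (x - y)) /\ (forall x y, S x -> S y -> S (x * y)).

Definition submodule (K : fieldType) (S M : K -> Prop) :=
  M 0 /\ (forall x y, M x -> M y -> M (x + y)) /\ (forall s x, S s -> M x -> M (s * x)).

Definition ideal (K : fieldType) (S I : K -> Prop) := submodule S I /\ subset I S.
Definition proper_ideal (K : fieldType) (S I : K -> Prop) := ideal S I /\ ~ I 1.
Definition prime_ideal (K : fieldType) (S P : K -> Prop) :=
  proper_ideal S P /\ forall a b, S a -> S b -> P (a * b) -> P a \/ P b.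
Definition maximal_ideal (K : fieldType) (S M : K -> Prop) :=
  proper_ideal S M /\ forall J, proper_ideal S J -> subset M J -> subset J M.
Definition primary_ideal (K : fieldType) (S I : K -> Prop) :=
  proper_ideal S I /\
  forall x y, S x -> S y -> I (x * y) -> ~ I x -> exists k : nat, I (y ^+ k).
Definition n_primary (K : fieldType) (S n I : K -> Prop) :=
  primary_ideal S I /\ forall x, S x -> ((exists k : nat, I (x ^+ k)) <-> n x).

Definition local_with (K : fieldType) (S n : K -> Prop) :=
  maximal_ideal S n /\ forall m, maximal_ideal S m -> forall x, m x <-> n x.

Definition krull_dim_one (K : fieldType) (S : K -> Prop) :=
  (exists P Q, prime_ideal S P /\ prime_ideal S Q /\ strict_subset P Q) /\
  ~ (exists P Q R, prime_ideal S P /\ prime_ideal S Q /\ prime_ideal S R /\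
        strict_subset P Q /\ strict_subset Q R).

Definition fin_gen (K : fieldType) (S M : K -> Prop) :=
  exists (k : nat) (g : nat -> K), forall x, M x <->
    exists c : nat -> K, (forall i, (i < k)%N -> S (c i)) /\
                         x = \sum_(i < k) c i * g i.

Definition noetherian (K : fieldType) (S : K -> Prop) :=
  forall I, ideal S I -> fin_gen S I.

(* A one-dimensional local Noetherian ring is regular iff its maximal ideal
   is generated by dim S = 1 element. *)
Definition regular_dim_one (K : fieldType) (S n : K -> Prop) :=
  exists x, S x /\ forall y, n y <-> exists s, S s /\ y = s * x.

(* The residue field S/n is infinite: no finite list of elements of S
   represents all classes mod n. *)
Definition infinite_residue (K : fieldType) (S n : K -> Prop) :=
  ~ exists s : seq K, (forall y, y \in s -> S y) /\
      forall x, S x -> exists y, y \in s /\ n (x - y).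

Definition quotient_field (K : fieldType) (S : K -> Prop) :=
  forall x, exists a b, S a /\ S b /\ b != 0 /\ x = a / b.

Definition integral_over (K : fieldType) (S : K -> Prop) (x : K) :=
  exists (k : nat) (a : nat -> K), (0 < k)%N /\ (forall i, S (a i)) /\
    x ^+ k + \sum_(i < k) a i * x ^+ i = 0.

(* v is a (discrete, Z-valued) valuation on K^*; its value at 0 is irrelevant. *)
Definition discrete_valuation (K : fieldType) (v : K -> int) :=
  (forall x y, x != 0 -> y != 0 -> v (x * y) = v x + v y) /\
  (forall x y, x != 0 -> y != 0 -> x + y != 0 -> Num.min (v x) (v y) <= v (x + y)).

(* The natural map S/n -> Sbar/t Sbar is well defined, injective and surjective. *)
Definition residue_iso (K : fieldType) (S n Sbar : K -> Prop) (t : K) :=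
  (forall x, n x -> exists y, Sbar y /\ x = t * y) /\
  (forall x, S x -> (exists y, Sbar y /\ x = t * y) -> n x) /\
  (forall y, Sbar y -> exists s, S s /\ exists z, Sbar z /\ y - s = t * z).

(* Length of the S-module A/B (B subset A submodules of K) via strict chains
   of S-submodules  B = M_0 < M_1 < ... < M_l = A. *)
Definition sub_chain (K : fieldType) (S : K -> Prop) (M : nat -> K -> Prop)
    (B A : K -> Prop) (l : nat) :=
  (forall i, submodule S (M i)) /\ (forall x, M 0%N x <-> B x) /\
  (forall x, M l x <-> A x) /\
  (forall i, (i < l)%N -> strict_subset (M i) (M i.+1)).

Definition has_length (K : fieldType) (S B A : K -> Prop) (l : nat) :=
  (exists M, sub_chain S M B A l) /\
  forall M m, sub_chain S M B A m -> (m <= l)%N.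

(* is_g I v m : m = g(I) = max { v a | a in K \ I, a <> 0 } (the max exists). *)
Definition is_g (K : fieldType) (I : K -> Prop) (v : K -> int) (m : int) :=
  (exists a, a != 0 /\ ~ I a /\ v a = m) /\
  forall a, a != 0 -> ~ I a -> v a <= m.

(* Everything is read through the valuation v.  Write V_c for the S-module
   {x | x = 0 \/ v x >= c}, so that the integral closure Sbar is V_0.  Since
   S/n ~ Sbar/tSbar, every element of V_0 is congruent to an element of S
   modulo tV_0; by successive approximation, an S-submodule M of V_0 that
   contains V_b is determined by its value set val_b(M) = v(M \ 0) /\ [0, b).
   Hence, for such modules B <= A, l_S(A/B) = #val_b(A) - #val_b(B): removing
   the least value of A missing from B gives a maximal chain step by step.

   A nonzero element of n, raised to a power lying in I and multiplied by a
   conductor element, yields b with V_b <= I.  With H = val_b(S), E = val_b(I)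
   we get l_S(S/I) = #H - #E and delta = b - #H.  If a is not in I, some
   w >= v a is not in E, and then w is not in H + E because SI <= I; counting
   the pairs (h, w - h) gives w + 1 <= (#H - #E) + 2(b - #H).  So the values
   of the elements outside I are bounded, g(I) exists, and the bound holds. *)

From mathcomp Require Import all_boot all_order all_algebra.
From mathcomp Require Import zify ring boolp.
Set Implicit Arguments. Unset Strict Implicit. Unset Printing Implicit Defensive.
Import Order.TTheory GRing.Theory Num.Theory.
Local Open Scope ring_scope.

Lemma subring0 (K : fieldType) (S : K -> Prop) : subring S -> S 0.
Proof. by case=> h1 [hB _]; rewrite -(subrr 1); apply: hB. Qed.

Lemma subringN (K : fieldType) (S : K -> Prop) x : subring S -> S x -> S (- x).
Proof.
move=> hS hx; have h0 := subring0 hS; case: hS => _ [hB _].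
by rewrite -sub0r; apply: hB.
Qed.

Lemma subringD (K : fieldType) (S : K -> Prop) x y :
  subring S -> S x -> S y -> S (x + y).
Proof.
move=> hS hx hy; have hny := subringN hS hy; case: hS => _ [hB _].
by rewrite -(opprK y); apply: hB.
Qed.

Lemma subringM (K : fieldType) (S : K -> Prop) x y :
  subring S -> S x -> S y -> S (x * y).
Proof. by case=> _ [_ hM]; apply: hM. Qed.

Lemma subring_submodule (K : fieldType) (S : K -> Prop) : subring S -> submodule S S.
Proof.
move=> hS; split; first exact: subring0.
by split=> [x y|s x]; [apply: subringD | apply: subringM].
Qed.

Lemma submodule0 (K : fieldType) (S M : K -> Prop) : submodule S M -> M 0.
Proof. by case. Qed.

Lemma submoduleD (K : fieldType) (S M : K -> Prop) x y :
  submodule S M -> M x -> M y -> M (x + y).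
Proof. by case=> _ [hD _]; apply: hD. Qed.

Lemma submoduleZ (K : fieldType) (S M : K -> Prop) s x :
  submodule S M -> S s -> M x -> M (s * x).
Proof. by case=> _ [_ hZ]; apply: hZ. Qed.

Lemma submoduleB (K : fieldType) (S M : K -> Prop) x y :
  subring S -> submodule S M -> M x -> M y -> M (x - y).
Proof.
move=> hS hM hx hy; rewrite -mulN1r.
have hN1 : S (-1) by apply: subringN (proj1 hS).
exact: submoduleD hM hx (submoduleZ hM hN1 hy).
Qed.

Lemma subring_integral (K : fieldType) (S : K -> Prop) s :
  subring S -> S s -> integral_over S s.
Proof.
move=> hS hs; exists 1%N, (fun _ => - s); split=> //.
split=> [_|]; first exact: subringN.
by rewrite big_ord1 expr1 expr0 mulr1 addrN.
Qed.

Section Valuation.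
Variables (K : fieldType) (v : K -> int).
Hypothesis hv : discrete_valuation v.

Lemma valM x y : x != 0 -> y != 0 -> v (x * y) = v x + v y.
Proof. by case: hv => hmul _; apply: hmul. Qed.

Lemma val1 : v 1 = 0.
Proof.
have h1 : (1 : K) != 0 := oner_neq0 _.
by have := valM h1 h1; rewrite mulr1; lia.
Qed.

Lemma valV x : x != 0 -> v x^-1 = - v x.
Proof. by move=> hx; have := valM hx (invr_neq0 hx); rewrite mulfV // val1; lia. Qed.

Lemma valN x : x != 0 -> v (- x) = v x.
Proof.
move=> hx; have hNx : - x != 0 by rewrite oppr_eq0.
by have := valM hNx hNx; rewrite mulrNN valM //; lia.
Qed.

Lemma valX t (k : nat) : t != 0 -> v t = 1 -> v (t ^+ k) = k%:Z.
Proof.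
move=> ht hvt; elim: k => [|k IH]; first by rewrite expr0 val1.
by rewrite exprS valM ?expf_neq0 // IH hvt; lia.
Qed.

Lemma valD_ge c x y : x != 0 -> y != 0 -> x + y != 0 ->
  c <= v x -> c <= v y -> c <= v (x + y).
Proof.
move=> hx hy hxy h1 h2; case: hv => _ /(_ x y hx hy hxy).
by rewrite ge_min => /orP [] h; [exact: le_trans h1 h | exact: le_trans h2 h].
Qed.

Lemma valD_lt x y : x != 0 -> y != 0 -> v x < v y -> x + y != 0 /\ v (x + y) = v x.
Proof.
move=> hx hy hlt; have hNy : - y != 0 by rewrite oppr_eq0.
have hxy : x + y != 0.
  apply: contraTneq hlt => /eqP; rewrite addr_eq0 => /eqP ->.
  by rewrite valN //; lia.
split=> //; case: hv => _ hD.
have := hD _ _ hx hy hxy; have := hD _ _ hxy hNy; rewrite addrK => /(_ hx).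
by rewrite valN // !ge_min => /orP [] h1 /orP [] h2; lia.
Qed.

End Valuation.

Definition val_ge (K : fieldType) (v : K -> int) (c : int) (x : K) := x = 0 \/ c <= v x.

Definition contains_val_ge (K : fieldType) (v : K -> int) (b : nat) (M : K -> Prop) :=
  forall x, x != 0 -> b%:Z <= v x -> M x.

Definition has_value (K : fieldType) (v : K -> int) (M : K -> Prop) (u : int) :=
  exists y, M y /\ y != 0 /\ v y = u.

Definition value_set (K : fieldType) (b : nat) (v : K -> int) (M : K -> Prop) : {set 'I_b} :=
  [set w : 'I_b | `[< has_value v M (nat_of_ord w)%:Z >]].

Lemma in_value_set (K : fieldType) (b : nat) (v : K -> int) (M : K -> Prop) (w : 'I_b) :
  (w \in value_set b v M) <-> has_value v M (nat_of_ord w)%:Z.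
Proof. by rewrite inE; split=> /asboolP. Qed.

Lemma value_set_sub (K : fieldType) (b : nat) (v : K -> int) (M M' : K -> Prop) :
  subset M M' -> value_set b v M \subset value_set b v M'.
Proof.
move=> hMM'; apply/subsetP=> w /in_value_set [y [hy hy0]]; apply/in_value_set.
by exists y; split; [apply: hMM'|].
Qed.

Lemma card_ord_le (b : nat) (w : 'I_b) : #|[set h : 'I_b | (h <= w)%N]| = (nat_of_ord w).+1.
Proof.
have lw : ((nat_of_ord w).+1 <= b)%N by apply: ltn_ord.
have -> : [set h : 'I_b | (h <= w)%N] = [set widen_ord lw j | j in [set: 'I_(nat_of_ord w).+1]].
  apply/setP=> h; rewrite inE; apply/idP/imsetP.
    by move=> hh; exists (Ordinal (hh : (h < (nat_of_ord w).+1)%N)); [rewrite inE | apply: val_inj].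
  by case=> j _ ->; rewrite /= -ltnS ltn_ord.
rewrite card_imset ?cardsT ?card_ord //.
by move=> i j /(congr1 val) /= e; apply: val_inj.
Qed.

(* Counting lemma for a gap of a "semigroup module": if E <= H in [0, b) and w
   is not of the form h + e with h in H and e in E, then w + 1 is at most
   #(H \ E) + 2 #([0, b) \ H).  Each h <= w either lies outside H, or has its
   complement w - h outside H, or has w - h in H \ E; h |-> w - h is injective. *)
Lemma sumset_gap_bound (b : nat) (H E : {set 'I_b}) (w : 'I_b) : E \subset H ->
  (forall h e : 'I_b, (h + e)%N = w -> h \in H -> e \in E -> False) ->
  ((nat_of_ord w).+1 <= (#|H| - #|E|) + 2 * (b - #|H|))%N.
Proof.
move=> hEH hsum.
have hr (h : 'I_b) : ((nat_of_ord w) - h < b)%N.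
  exact: leq_ltn_trans (leq_subr h w) (ltn_ord w).
pose r (h : 'I_b) : 'I_b := Ordinal (hr h).
pose X := [set h : 'I_b | (h <= w)%N].
pose P := [set h in X | (h \in H) && (r h \in H)].
pose R := [set h in X | r h \notin H].
have rinj : {in X &, injective r}.
  move=> i j; rewrite !inE => hi hj /(congr1 val) /= e; apply: ord_inj.
  by move: e hi hj; move: (nat_of_ord i) (nat_of_ord j) (nat_of_ord w) => x y z; lia.
have hcompl : #|~: H| = (b - #|H|)%N by rewrite cardsCs setCK card_ord.
have hX : X \subset P :|: (~: H :|: R).
  apply/subsetP=> h hX; rewrite !inE; move: hX; rewrite inE => ->.
  by case: (h \in H); case: (r h \in H).
have hR : (#|R| <= #|~: H|)%N.
  rewrite -(card_in_imset (f := r) (D := R)); last first.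
    by move=> i j; rewrite !inE => /andP [hi _] /andP [hj _]; apply: rinj; rewrite inE.
  apply: subset_leq_card; apply/subsetP=> x /imsetP [h]; rewrite !inE => /andP [_ hh] ->.
  exact: hh.
have hP : (#|P| <= #|H| - #|E|)%N.
  rewrite -(card_in_imset (f := r) (D := P)); last first.
    by move=> i j; rewrite !inE => /andP [hi _] /andP [hj _]; apply: rinj; rewrite inE.
  rewrite -(setIidPr hEH) -cardsD.
  apply: subset_leq_card; apply/subsetP=> x /imsetP [h].
  rewrite !inE => /andP [hh /andP [hH hrH]] ->.
  rewrite hrH andbT; apply/negP=> hE; apply: (hsum h (r h)) => //=; lia.
have := subset_leq_card hX; rewrite card_ord_le.
have := leq_of_leqif (leq_card_setU P (~: H :|: R)).
have := leq_of_leqif (leq_card_setU (~: H) R).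
move=> h1 h2 h3; apply: (leq_trans h3); apply: (leq_trans h2).
rewrite mul2n -addnn -hcompl; apply: leq_add => //.
by apply: (leq_trans h1); apply: leq_add.
Qed.

(* The hypotheses of the theorem in valuation-theoretic form: S is a subring
   of the valuation ring V_0, t is a uniformizer, and every element of V_0 is
   congruent modulo tV_0 to an element of S (surjectivity of S/n -> Sbar/tSbar). *)
Record valued_subring (K : fieldType) (S : K -> Prop) (v : K -> int) (t : K) := {
  vs_ring : subring S;
  vs_val : discrete_valuation v;
  vs_t0 : t != 0;
  vs_vt : v t = 1;
  vs_sub : subset S (val_ge v 0);
  vs_res : forall y, val_ge v 0 y ->
    exists s, S s /\ exists z, val_ge v 0 z /\ y - s = t * z }.

Section ValuedSubring.
Variables (K : fieldType) (S : K -> Prop) (v : K -> int) (t : K).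
Hypothesis H : valued_subring S v t.
Let hS : subring S := vs_ring H.
Let hv : discrete_valuation v := vs_val H.

(* Each V_c is an S-submodule of K, by the ultrametric inequality and S <= V_0. *)
Lemma val_ge_submodule c : submodule S (val_ge v c).
Proof.
split; first by left.
split=> [x y hx hy|s x hs hx].
- have [->|x0] := eqVneq x 0; first by rewrite add0r.
  have [->|y0] := eqVneq y 0; first by rewrite addr0.
  have [|xy0] := eqVneq (x + y) 0; first by left.
  case: hx hy => [/eqP|hx]; first by rewrite (negbTE x0).
  case=> [/eqP|hy]; first by rewrite (negbTE y0).
  by right; apply: valD_ge.
- have [->|s0] := eqVneq s 0; first by rewrite mul0r; left.
  have [->|x0] := eqVneq x 0; first by rewrite mulr0; left.
  case: hx => [/eqP|hx]; first by rewrite (negbTE x0).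
  case: (vs_sub H hs) => [/eqP|hs0]; first by rewrite (negbTE s0).
  by right; rewrite valM //; lia.
Qed.

(* One approximation step: an element of S cancels the leading term of x
   against any y of the same value. *)
Lemma residue_approx x y : x != 0 -> y != 0 -> v x = v y ->
  exists s, S s /\ (x - s * y = 0 \/ v x < v (x - s * y)).
Proof.
move=> x0 y0 exy.
have hu : val_ge v 0 (x / y) by right; rewrite valM ?invr_neq0 // valV // exy; lia.
have [s [hs [z [hz e]]]] := vs_res H hu.
exists s; split=> //.
have -> : x - s * y = t * z * y by rewrite -e mulrBl divfK.
have [->|z0] := eqVneq z 0; first by rewrite mulr0 mul0r; left.
right; rewrite !valM ?mulf_neq0 ?(vs_t0 H) // (vs_vt H) exy.
by case: hz => [z0'|]; [rewrite z0' eqxx in z0 | lia].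
Qed.

(* Successive approximation: if M contains V_b and every nonzero x in Q of
   value below b can be reduced by an element of M of the same value (staying
   in Q), then Q is contained in M; the reductions terminate since values rise. *)
Lemma successive_approx (M Q : K -> Prop) (b : nat) :
  submodule S M -> contains_val_ge v b M ->
  (forall x y s, Q x -> M y -> S s -> x != 0 -> y != 0 -> v y = v x ->
     (x - s * y = 0 \/ v x < v (x - s * y)) -> Q (x - s * y)) ->
  (forall x, Q x -> x != 0 -> v x < b%:Z -> has_value v M (v x)) ->
  (forall x, Q x -> x != 0 -> 0 <= v x) ->
  subset Q M.
Proof.
move=> hM hb hcl hval hpos.
suff main : forall k : nat, forall x, Q x -> x != 0 -> b%:Z <= v x + k%:Z -> M x.
  move=> x hx; have [->|x0] := eqVneq x 0; first exact: submodule0 hM.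
  by apply: (main b) => //; have := hpos x hx x0; lia.
elim=> [|k IH] x hx x0 hk; first by apply: hb => //; lia.
have [hge|hlt] := leP b%:Z (v x); first exact: hb.
have [y [hy [y0 ey]]] := hval x hx x0 hlt.
have [s [hs hr]] := residue_approx x0 y0 (esym ey).
rewrite -(subrK (s * y) x); apply: (submoduleD hM); last exact: submoduleZ hM hs hy.
have [->|z0] := eqVneq (x - s * y) 0; first exact: submodule0 hM.
case: hr => [e0|hr]; first by rewrite e0 eqxx in z0.
apply: IH => //; first exact: hcl x y s hx hy hs x0 y0 ey (or_intror hr).
by move: hk hr; set a := v x; set c := v _; rewrite -addn1 PoszD; lia.
Qed.

Lemma value_set_determines (b : nat) (M M' : K -> Prop) :
  submodule S M -> submodule S M' -> subset M M' -> contains_val_ge v b M ->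
  subset M' (val_ge v 0) -> value_set b v M' \subset value_set b v M -> subset M' M.
Proof.
move=> hM hM' hsub hb hpos hsv.
have hvpos x : M' x -> x != 0 -> 0 <= v x.
  by move=> /hpos [->|//]; rewrite eqxx.
apply: (successive_approx hM hb) => //.
- move=> x y s hx hy hs _ _ _ _; apply: (submoduleB hS hM') => //.
  exact: submoduleZ hM' hs (hsub _ hy).
- move=> x hx x0 hlt; have hp := hvpos x hx x0.
  have hw : (`|v x|%N < b)%N by move: hlt hp; lia.
  have hin : Ordinal hw \in value_set b v M'.
    by apply/in_value_set; exists x; split=> //; split=> //=; lia.
  move/subsetP: hsv => /(_ _ hin) /in_value_set [y [hy [y0 ey]]].
  by exists y; split=> //; split=> //; rewrite ey /=; lia.
Qed.

(* Each strict step of a chain from B to A adds at least one value. *)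
Lemma value_set_chain_bound (b : nat) (B A : K -> Prop) Ms m :
  contains_val_ge v b B -> subset A (val_ge v 0) -> sub_chain S Ms B A m ->
  (#|value_set b v B| + m <= #|value_set b v A|)%N.
Proof.
move=> hb hA [hsm [h0 [hl hst]]].
have hMA j i : (i + j = m)%N -> subset (Ms i) A.
  elim: j i => [|j IH] i e x hx; first by apply/hl; rewrite -e addn0.
  have hi : (i < m)%N by rewrite -e; lia.
  by apply: (IH i.+1); [rewrite -e; lia | case: (hst i hi) => hs _; apply: hs].
have hBM i : (i <= m)%N -> subset B (Ms i).
  elim: i => [|i IH] him x hx; first exact/h0.
  by case: (hst i him) => hs _; apply: hs; apply: IH => //; lia.
have hstep i : (i < m)%N -> value_set b v (Ms i) \proper value_set b v (Ms i.+1).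
  move=> him; case: (hst i him) => hs [x [hx1 hx2]].
  rewrite properE value_set_sub //=; apply/negP=> hsv; apply: hx2.
  apply: (value_set_determines (hsm i) (hsm i.+1) hs _ _ hsv) x hx1.
  - by move=> y y0 hy; apply: (hBM i (ltnW him)); apply: hb.
  - by move=> y hy; apply: hA; apply: (hMA (m - i.+1)%N i.+1) => //; lia.
have hcard i : (i <= m)%N -> (#|value_set b v B| + i <= #|value_set b v (Ms i)|)%N.
  elim: i => [|i IH] him.
    by rewrite addn0; apply/subset_leq_card/value_set_sub => x /h0.
  by have := proper_card (hstep i him); have := IH (ltnW him); lia.
apply: leq_trans (hcard m (leqnn m)) _.
by apply/subset_leq_card/value_set_sub => x /hl.
Qed.

Definition trunc_sum (B A : K -> Prop) (c : int) (x : K) :=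
  exists y z, B y /\ A z /\ val_ge v c z /\ x = y + z.

Lemma trunc_sum_submodule B A c :
  submodule S B -> submodule S A -> submodule S (trunc_sum B A c).
Proof.
move=> hB hA; have hV := val_ge_submodule c.
split.
  by exists 0, 0; rewrite addr0; do !split; [exact: submodule0 hB | exact: submodule0 hA | left].
split=> [x1 x2|s x hs].
- move=> [y1 [z1 [hy1 [hz1 [hv1 ->]]]]] [y2 [z2 [hy2 [hz2 [hv2 ->]]]]].
  exists (y1 + y2), (z1 + z2); rewrite addrACA.
  by do !split; [exact: submoduleD hB hy1 hy2 | exact: submoduleD hA hz1 hz2
    | exact: submoduleD hV hv1 hv2].
- move=> [y [z [hy [hz [hvz ->]]]]]; exists (s * y), (s * z); rewrite mulrDr.
  by do !split; [exact: submoduleZ hB hs hy | exact: submoduleZ hA hs hz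
    | exact: submoduleZ hV hs hvz].
Qed.

Lemma trunc_sum_between B A c : submodule S A -> subset B A ->
  subset B (trunc_sum B A c) /\ subset (trunc_sum B A c) A.
Proof.
move=> hA hBA; split=> [x hx|x [y [z [hy [hz [_ ->]]]]]].
  by exists x, 0; rewrite addr0; do !split=> //; [exact: submodule0 hA | left].
exact: submoduleD hA (hBA _ hy) hz.
Qed.

Lemma value_set_trunc_sum (b : nat) B A (w : 'I_b) :
  submodule S B -> submodule S A -> subset B A ->
  w \in value_set b v A -> w \notin value_set b v B ->
  (forall u : 'I_b, (u < w)%N -> u \in value_set b v A -> u \in value_set b v B) ->
  value_set b v (trunc_sum B A (nat_of_ord w).+1%:Z) = value_set b v A :\ w.
Proof.
move=> hB hA hBA hwA hwB hmin.
have [hBT hTA] := trunc_sum_between (nat_of_ord w).+1%:Z hA hBA.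
have hwT : w \notin value_set b v (trunc_sum B A (nat_of_ord w).+1%:Z).
  apply: contra hwB => /in_value_set [x [[y [z [hy [_ [hvz ex]]]]] [x0 vx]]].
  apply/in_value_set; exists y; split=> //.
  have -> : y = x + - z by rewrite ex addrK.
  have [z0|z0] := eqVneq z 0; first by rewrite z0 oppr0 addr0.
  have nz0 : - z != 0 by rewrite oppr_eq0.
  have hlt : v x < v (- z).
    by rewrite valN //; case: hvz => [/eqP|]; [rewrite (negbTE z0) | rewrite vx; lia].
  by have [-> ->] := valD_lt hv x0 nz0 hlt.
apply/setP=> u; rewrite in_setD1; apply/idP/andP.
- move=> hu; split; first by apply: contraTneq hu => ->.
  exact: (subsetP (value_set_sub b v hTA)).
- case=> uw /in_value_set [x [hx [x0 vx]]]; apply/in_value_set.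
  have [hlt|hge] := ltnP u w.
    have /in_value_set [y [hy hy']] : u \in value_set b v B.
      by apply: hmin => //; apply/in_value_set; exists x.
    by exists y; split=> //; apply: hBT.
  exists x; split=> //; exists 0, x; rewrite add0r; do !split=> //.
    exact: submodule0 hB.
  by right; rewrite vx; move: uw hge; rewrite eq_sym neq_ltn => /orP [] /=; lia.
Qed.

(* Conversely, a chain of length #val_b(A) - #val_b(B) exists: repeatedly drop
   the least value of A that B does not take. *)
Lemma value_set_chain_exists (b : nat) B : submodule S B -> contains_val_ge v b B ->
  forall k A, submodule S A -> subset B A -> subset A (val_ge v 0) ->
  #|value_set b v A| = (#|value_set b v B| + k)%N -> exists Ms, sub_chain S Ms B A k.
Proof.
move=> hB hb; elim=> [|k IH] A hA hBA hA0 hcard.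
  have hAB : subset A B.
    apply: (value_set_determines hB hA hBA hb hA0).
    have /eqP -> : value_set b v B == value_set b v A.
      by rewrite eqEcard value_set_sub // hcard addn0 leqnn.
    exact: subxx.
  by exists (fun _ => B); do !split=> //; [exact: hBA | exact: hAB].
have : value_set b v B \proper value_set b v A.
  by rewrite properEcard value_set_sub // hcard; lia.
case/properP=> _ [w0 hw0A hw0B].
pose P := [pred u : 'I_b | (u \in value_set b v A) && (u \notin value_set b v B)].
have P0 : P w0 by rewrite /= hw0A.
case: (arg_minnP (fun u : 'I_b => nat_of_ord u) P0) => w /andP [hwA hwB] hwmin.
have hmin (u : 'I_b) : (u < w)%N -> u \in value_set b v A -> u \in value_set b v B.
  move=> hu huA; apply: contraTT hu => huB; rewrite -leqNgt.
  by apply: hwmin; rewrite /= huA.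
pose A' := trunc_sum B A (nat_of_ord w).+1%:Z.
have [hBA' hA'A] := trunc_sum_between (nat_of_ord w).+1%:Z hA hBA.
have hvsA' := value_set_trunc_sum hB hA hBA hwA hwB hmin.
have hcard' : #|value_set b v A'| = (#|value_set b v B| + k)%N.
  by move: hcard; rewrite hvsA' (cardsD1 w) hwA addnS add1n => -[].
have [Ms [hsm [h0 [hl hst]]]] :=
  IH A' (trunc_sum_submodule _ hB hA) hBA' (fun x hx => hA0 x (hA'A x hx)) hcard'.
exists (fun i => if (i <= k)%N then Ms i else A).
split; first by move=> i; case: ifP.
split; first by [].
split; first by rewrite ltnn.
move=> i hi; have [hik|hik] := ltnP i k; first by rewrite (ltnW hik); apply: hst.
have -> : i = k by lia.
rewrite leqnn; split; first by move=> x /hl /hA'A.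
have /in_value_set [x [hx [x0 vx]]] := hwA.
exists x; split=> // /hl hxA'.
have : w \in value_set b v A' by apply/in_value_set; exists x.
by rewrite hvsA' setD11.
Qed.

Lemma has_length_value_sets (b : nat) B A :
  submodule S B -> submodule S A -> subset B A ->
  contains_val_ge v b B -> subset A (val_ge v 0) ->
  has_length S B A (#|value_set b v A| - #|value_set b v B|).
Proof.
move=> hB hA hBA hb hA0; split.
  apply: (value_set_chain_exists hB hb) => //.
  by have := subset_leq_card (value_set_sub b v hBA); lia.
by move=> Ms m /(value_set_chain_bound hb hA0); lia.
Qed.

(* V_0 takes every value, namely v (t ^+ w) = w. *)
Lemma card_value_set_val_ge0 (b : nat) : #|value_set b v (val_ge v 0)| = b.
Proof.
suff -> : value_set b v (val_ge v 0) = [set: 'I_b] by rewrite cardsT card_ord.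
apply/setP=> w; rewrite !inE.
have ht := vs_t0 H; have hvt := vs_vt H.
apply/asboolP; exists (t ^+ w).
by do !split; [right | exact: expf_neq0 |]; rewrite (valX hv _ ht hvt).
Qed.

(* If a lies outside I and v a >= 0, some w >= v a below b is not a value of I:
   otherwise successive approximation inside V_(v a) would put a in I. *)
Lemma missing_value_above (b : nat) I a : submodule S I -> contains_val_ge v b I ->
  a != 0 -> ~ I a -> 0 <= v a ->
  exists w : 'I_b, v a <= (nat_of_ord w)%:Z /\ w \notin value_set b v I.
Proof.
move=> hI hb a0 haI hpos; apply: contrapT => hno; apply: haI.
apply: (successive_approx (Q := val_ge v (v a)) hI hb); last by right.
- move=> x y s [->|hx] _ _ x0 _ _ hr; first by rewrite eqxx in x0.
  have [->|z0] := eqVneq (x - s * y) 0; first by left.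
  case: hr => [/eqP|hr]; first by rewrite (negbTE z0).
  by right; exact: le_trans hx (ltW hr).
- move=> x [->|hxa] x0 hlt; first by rewrite eqxx in x0.
  have hw : (`|v x|%N < b)%N by move: hlt hxa hpos; lia.
  have : Ordinal hw \in value_set b v I.
    apply: contrapT => hnin; apply: hno; exists (Ordinal hw); split; last exact/negP.
    by rewrite /=; move: hxa hpos; lia.
  case/in_value_set=> y [hy [y0 vy]]; exists y; split=> //; split=> //.
  by rewrite vy /=; move: hxa hpos; lia.
- move=> x [->|hxa] x0; first by rewrite eqxx in x0.
  exact: le_trans hpos hxa.
Qed.

(* The missing value
   w >= v a is not h + e with h in val_b(S), e in val_b(I), since S I <= I. *)
Lemma gap_bound (b : nat) I a : submodule S I -> subset I S -> contains_val_ge v b I ->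
  a != 0 -> ~ I a ->
  v a + 1 <= (#|value_set b v S| - #|value_set b v I|)%N%:Z
             + 2 * (b - #|value_set b v S|)%N%:Z.
Proof.
move=> hI hIS hb a0 haI.
have [hneg|hpos] := ltP (v a) 0; first lia.
have [w [hwa hwI]] := missing_value_above hI hb a0 haI hpos.
have hsum (h e : 'I_b) : (h + e)%N = w -> h \in value_set b v S ->
    e \in value_set b v I -> False.
  move=> hwhe /in_value_set [s [hs [s0 vs]]] /in_value_set [y [hy [y0 vy]]].
  apply: (negP hwI); apply/in_value_set; exists (s * y).
  split; first exact: submoduleZ hI hs hy.
  by split; [rewrite mulf_neq0 | rewrite valM // vs vy -hwhe].
have := sumset_gap_bound (value_set_sub b v hIS) hsum.
by move: hwa; set cS := #|_|; set cI := #|_|; lia.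
Qed.

End ValuedSubring.

(* A finitely generated S-submodule of the quotient field has a nonzero
   conductor element D with D * Sb <= S: the product of the denominators of
   the generators. *)
Lemma conductor_nonzero (K : fieldType) (S Sb : K -> Prop) :
  subring S -> quotient_field S -> fin_gen S Sb ->
  exists D, S D /\ D != 0 /\ forall x, Sb x -> S (D * x).
Proof.
move=> hS hq [k [g hg]].
have hden m : exists D, S D /\ D != 0 /\ forall i, (i < m)%N -> S (D * g i).
  elim: m => [|m [D [hD [D0 hDg]]]].
    by exists 1; split; [case: hS | split=> //; exact: oner_neq0].
  have [a [d [ha [hd [d0 e]]]]] := hq (g m).
  exists (D * d); split; first exact: subringM.
  split; first by rewrite mulf_neq0.
  move=> i; rewrite ltnS leq_eqVlt => /orP [/eqP ->|hi].
    by rewrite e -mulrA (mulrCA d) mulfV // mulr1; apply: subringM.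
  by rewrite mulrAC; apply: subringM => //; apply: hDg.
have [D [hD [D0 hDg]]] := hden k.
exists D; split=> //; split=> // x /hg [c [hc ->]].
rewrite mulr_sumr; apply: (big_ind S); first exact: subring0.
  by move=> x1 x2; apply: subringD.
by move=> i _; rewrite mulrCA; apply: subringM => //; [exact: hc | exact: hDg].
Qed.

(* In a non-regular one-dimensional local ring the maximal ideal is nonzero
   (the zero ideal would be principal). *)
Lemma nonregular_nonzero (K : fieldType) (S n : K -> Prop) :
  subring S -> ideal S n -> ~ regular_dim_one S n -> exists e, S e /\ n e /\ e != 0.
Proof.
move=> hS [hnsub hnS] hnreg; apply: contrapT => hno; apply: hnreg.
exists 0; split; first exact: subring0.
move=> y; split=> [hy|[s [_ ->]]]; last by rewrite mulr0; exact: submodule0 hnsub.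
exists 0; rewrite mulr0; split; first exact: subring0.
apply: contrapT => hy0; apply: hno; exists y; do !split=> //; [exact: hnS | exact/eqP].
Qed.

(* An n-primary ideal I contains V_b for some b: for 0 != e in n some e ^+ k
   lies in I, and e ^+ k * D * V_0 <= I for a nonzero conductor element D. *)
Lemma n_primary_contains_val_ge (K : fieldType) (S n I : K -> Prop) (v : K -> int) :
  subring S -> quotient_field S -> discrete_valuation v -> fin_gen S (val_ge v 0) ->
  n_primary S n I -> (exists e, S e /\ n e /\ e != 0) ->
  exists b : nat, contains_val_ge v b I.
Proof.
move=> hS hq hv hfg [[[[hI _] _] _] hrad] [e [hSe [ne e0]]].
have [k hk] := proj2 (hrad e hSe) ne.
have ek0 : e ^+ k != 0 by apply: expf_neq0.
have [D [hD [D0 hDV]]] := conductor_nonzero hS hq hfg.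
exists (absz (v (e ^+ k * D))) => x x0 hbx.
have ekD0 : e ^+ k * D != 0 by rewrite mulf_neq0.
have hu : val_ge v 0 (x / (e ^+ k * D)).
  by right; rewrite valM ?invr_neq0 // valV //; move: hbx; lia.
have -> : x = (D * (x / (e ^+ k * D))) * e ^+ k by field; rewrite ek0 D0.
exact: submoduleZ hI (hDV _ hu) hk.
Qed.

Lemma is_g_exists (K : fieldType) (I : K -> Prop) (v : K -> int) (N : nat) :
  ~ I 1 -> v 1 = 0 -> (forall a, a != 0 -> ~ I a -> v a <= N%:Z) ->
  exists m, is_g I v m.
Proof.
move=> hI1 hv1 hbound.
pose P (m : nat) := `[< exists a, a != 0 /\ ~ I a /\ v a = m%:Z >].
have exP : exists m, P m.
  by exists 0%N; apply/asboolP; exists 1; do !split=> //; exact: oner_neq0.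
have ubP m : P m -> (m <= N)%N.
  by move=> /asboolP [a [a0 [haI va]]]; have := hbound a a0 haI; rewrite va; lia.
case: (ex_maxnP exP ubP) => i /asboolP [a [a0 [haI va]]] imax.
exists i%:Z; split; first by exists a.
move=> a' a'0 ha'I; have [hneg|hpos] := ltP (v a') 0; first lia.
have : P `|v a'|%N by apply/asboolP; exists a'; do !split=> //; lia.
by move/imax; lia.
Qed.

Theorem theorem4p8 (K : fieldType) (S n I : K -> Prop) (v : K -> int) (t : K) :
  subring S -> quotient_field S -> noetherian S -> local_with S n ->
  krull_dim_one S -> ~ regular_dim_one S n -> infinite_residue S n ->
  (forall x, integral_over S x <-> x = 0 \/ 0 <= v x) ->
  discrete_valuation v ->
  integral_over S t -> t != 0 -> v t = 1 ->
  fin_gen S (integral_over S) ->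
  residue_iso S n (integral_over S) t ->
  n_primary S n I ->
  exists (l d : nat) (m : int),
    has_length S I S l /\ has_length S S (integral_over S) d /\
    is_g I v m /\ m + 1 <= (l%:Z + 2 * d%:Z).
Proof.
move=> hS hq _ [[[hn _] _] _] _ hnreg _ hSbar hv _ t0 vt hfg hiso hprim.
have eSbar : integral_over S = val_ge v 0 by apply/funext => x; apply/propext.
rewrite eSbar in hfg hiso *.
have hSV : subset S (val_ge v 0) by move=> s /(subring_integral hS); rewrite eSbar.
have H : valued_subring S v t by case: hiso => _ [_ hres]; split.
have [[[[hI hIS] hI1] _] _] := hprim.
have [b hb] := n_primary_contains_val_ge hS hq hv hfg hprim (nonregular_nonzero hS hn hnreg).
have hbS : contains_val_ge v b S by move=> x x0 hx; apply/hIS/hb.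
have hgap := gap_bound H hI hIS hb.
pose l := (#|value_set b v S| - #|value_set b v I|)%N.
pose d := (b - #|value_set b v S|)%N.
have [m [[a [a0 [haI vam]]] hmax]] : exists m, is_g I v m.
  by apply: (is_g_exists (N := (l + 2 * d)%N) hI1 (val1 hv)) => a a0 haI; have := hgap a a0 haI; lia.
exists l, d, m; split; first exact: (has_length_value_sets H hI (subring_submodule hS) hIS hb hSV).
split.
  have := has_length_value_sets H (subring_submodule hS) (val_ge_submodule H 0) hSV hbS (fun x h => h).
  by rewrite (card_value_set_val_ge0 H).
split; first by split; [exists a | exact: hmax].
by rewrite -vam; exact: hgap.
Qed.
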